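(* There exist an integer $m\ge 3$, parameters $\beta,\beta',p,p'\in[0,1]$ and $\pi\in(0,1)$ such that the games $G(m,\beta,\beta')$ and $G(m,p,p')$ are both losing games, while their random mixture $G(m,\pi p+(1-\pi)\beta,\ \pi p'+(1-\pi)\beta')$ is a winning game.
   Context: For $m\ge1$ and $a,a'\in[0,1]$, the Parrondo game $G(m,a,a')$ is the Markov chain $\{S_n\}$ on $\mathbb{Z}$ with $S_0=0$, steps $S_{n+1}-S_n\in\{-1,+1\}$, and $P(S_{n+1}-S_n=1\mid S_0,\dots,S_n)=a'\,1_{[S_n\in m\mathbb{Z}]}+a\,1_{[S_n\notin m\mathbb{Z}]}$. A game is called winning, losing, or fair according as the almost sure limit of $S_n/n$ is positive, negative, or zero. The random mixture with mixing probability $\pi$ corresponds to choosing, independently at each play, the first game with probability $\pi$ and the second with probability $1-\pi$. *)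

From HB Require Import structures.
From mathcomp Require Import all_boot all_order all_algebra.
From mathcomp Require Import all_classical all_reals all_analysis.
Set Implicit Arguments. Unset Strict Implicit. Unset Printing Implicit Defensive.
Import Order.TTheory GRing.Theory Num.Theory.
Local Open Scope classical_set_scope.
Local Open Scope ring_scope.
Import numFieldNormedType.Exports.

Definition up_prob (R : realType) (m : nat) (a a' : R) (x : int) : R :=
  if (m%:Z %| x)%Z then a' else a.

(* S : nat -> T -> int is a realization, on the probability space (T,P),
   of the Parrondo game G(m,a,a'): S_0 = 0, steps are +-1, the events
   {S_n = k} are measurable, and for every n and every history h,
   P(S_0=h_0,...,S_n=h_n, S_{n+1}-S_n = 1) = up_prob(h_n) * P(S_0=h_0,...,S_n=h_n),
   i.e. P(S_{n+1}-S_n=1 | S_0,...,S_n) = a' 1[S_n in mZ] + a 1[S_n notin mZ]. *)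
Definition parrondo_realization (R : realType) (d : measure_display)
    (T : measurableType d) (P : probability T R)
    (m : nat) (a a' : R) (S : nat -> T -> int) : Prop :=
  (forall w, S 0%N w = 0) /\
  (forall n w, S n.+1 w - S n w = 1 \/ S n.+1 w - S n w = -1) /\
  (forall n (k : int), measurable [set w | S n w = k]) /\
  (forall n (h : nat -> int),
     P [set w | (forall i, (i <= n)%N -> S i w = h i) /\ S n.+1 w - S n w = 1]
     = ((up_prob m a a' (h n))%:E *
        P [set w | forall i, (i <= n)%N -> S i w = h i])%E).

Definition game_realizable (R : realType) (m : nat) (a a' : R) : Prop :=
  exists (d : measure_display) (T : measurableType d) (P : probability T R)
         (S : nat -> T -> int), parrondo_realization P m a a' S.

Definition winning_game (R : realType) (m : nat) (a a' : R) : Prop :=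
  game_realizable m a a' /\
  forall (d : measure_display) (T : measurableType d) (P : probability T R)
         (S : nat -> T -> int), parrondo_realization P m a a' S ->
    {ae P, forall w, exists l : R, 0 < l /\
        (fun n : nat => (S n w)%:~R / n%:R) @ \oo --> (l : R^o)}.

Definition losing_game (R : realType) (m : nat) (a a' : R) : Prop :=
  game_realizable m a a' /\
  forall (d : measure_display) (T : measurableType d) (P : probability T R)
         (S : nat -> T -> int), parrondo_realization P m a a' S ->
    {ae P, forall w, exists l : R, l < 0 /\
        (fun n : nat => (S n w)%:~R / n%:R) @ \oo --> (l : R^o)}.

From HB Require Import structures.
From mathcomp Require Import all_boot all_order all_algebra.
From mathcomp Require Import all_classical all_reals all_analysis.
From mathcomp Require Import ring lra.
Set Implicit Arguments. Unset Strict Implicit. Unset Printing Implicit Defensive.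
Import Order.TTheory GRing.Theory Num.Theory.
Import numFieldNormedType.Exports.
Local Open Scope classical_set_scope.
Local Open Scope ring_scope.

(* Let [u] be the up-probability of [G(m, a, a')]. If a bounded [g : int -> R]
   solves the Poisson equation [u z (1 + g (z+1)) + (1 - u z) (-1 + g (z-1)) - g z = c],
   then [M_n := S_n + g S_n - g 0 - n c] is a martingale with bounded increments, so
   [E M_n^4 = O(n^2)]; Markov's inequality and Borel-Cantelli give [M_n / n -> 0]
   almost surely, i.e. [S_n / n -> c]. For [m = 3] and [g] of period 3 with [g 0 = 0]
   the Poisson equation is a 3x3 linear system in [(g 1, g 2, c)]; for
   [(beta, beta') = (3/7, 5/8)], [(p, p') = (5/7, 1/8)] and their half-half mixture
   [(4/7, 3/8)] it gives [c = -9/877], [-1/93] and [9/877].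
   Every game is realized on [[0,1[] with Lebesgue measure by cutting intervals
   in proportion to the step probabilities. *)

Definition step_int (x : bool) : int := if x then 1 else -1.

(* Paths are stored latest step first: [x :: b] extends [b] by the step [x]. *)
Fixpoint path_end (b : seq bool) : int :=
  if b is x :: b' then path_end b' + step_int x else 0.

Definition path_at (b : seq bool) (i : nat) : int := path_end (drop (size b - i) b).

Fixpoint bool_paths (n : nat) : seq (seq bool) :=
  if n is n'.+1 then flatten [seq [:: true :: b; false :: b] | b <- bool_paths n']
  else [:: [::]].

Lemma big_bool_paths (V : Type) (idx : V) (op : Monoid.com_law idx) n
    (F : seq bool -> V) :
  \big[op/idx]_(b <- bool_paths n.+1) F b =
  \big[op/idx]_(b <- bool_paths n) op (F (true :: b)) (F (false :: b)).
Proof.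
rewrite /= big_flatten /= big_map; apply: eq_bigr => b _.
by rewrite !big_cons big_nil Monoid.mulm1.
Qed.

Lemma mem_bool_paths n b : (b \in bool_paths n) = (size b == n).
Proof.
elim: n b => [|n IH] b; first by case: b.
apply/idP/idP.
  move=> /flattenP [s /mapP [b' b'in ->]]; rewrite !inE => /orP[] /eqP ->;
  by rewrite /= eqSS -IH.
case: b => [//|x b] /=; rewrite eqSS -IH => bin.
apply/flattenP; exists [:: true :: b; false :: b]; first by apply/mapP; exists b.
by case: x; rewrite !inE eqxx ?orbT.
Qed.

Section PathWeight.
Variables (R : realFieldType) (u : int -> R).
Hypothesis u01 : forall z, 0 <= u z <= 1.

Definition step_prob (x : bool) (z : int) : R := if x then u z else 1 - u z.

Fixpoint path_weight (b : seq bool) : R :=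
  if b is x :: b' then path_weight b' * step_prob x (path_end b') else 1.

Lemma path_weight_ge0 b : 0 <= path_weight b.
Proof.
elim: b => [|x b IH] //=; rewrite mulr_ge0 //.
by case: x; have := u01 (path_end b); rewrite /step_prob; lra.
Qed.

Lemma sum_path_weight n : \sum_(b <- bool_paths n) path_weight b = 1.
Proof.
elim: n => [|n IH]; first by rewrite /= big_seq1.
rewrite big_bool_paths -[RHS]IH; apply: eq_bigr => b _ /=.
by rewrite -mulrDr addrC subrK mulr1.
Qed.

End PathWeight.

Section CenteredStep.
Variables (R : realFieldType) (K t : R).
Hypothesis t01 : 0 <= t <= 1.

Lemma norm_convex_powr_le (Dp Dm : R) k : `|Dp| <= K -> `|Dm| <= K ->
  `|t * Dp ^+ k + (1 - t) * Dm ^+ k| <= K ^+ k.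
Proof.
move=> hp hm; have /andP[t0 t1] := t01; have t'0 : 0 <= 1 - t by lra.
have K0 : 0 <= K := le_trans (normr_ge0 _) hp.
apply: le_trans (ler_normD _ _) _.
rewrite !normrM !normrX (ger0_norm t0) (ger0_norm t'0).
have := ler_wpM2l t0 (lerXn2r k (normr_ge0 _) K0 hp).
have := ler_wpM2l t'0 (lerXn2r k (normr_ge0 _) K0 hm).
lra.
Qed.

Variables (Dp Dm : R).
Hypothesis centered : t * Dp + (1 - t) * Dm = 0.
Hypotheses (Dp_le : `|Dp| <= K) (Dm_le : `|Dm| <= K).

Lemma centered_step_sqr_le M :
  t * (M + Dp) ^+ 2 + (1 - t) * (M + Dm) ^+ 2 <= M ^+ 2 + K ^+ 2.
Proof.
have -> : t * (M + Dp) ^+ 2 + (1 - t) * (M + Dm) ^+ 2 =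
    M ^+ 2 + 2 * M * (t * Dp + (1 - t) * Dm) + (t * Dp ^+ 2 + (1 - t) * Dm ^+ 2).
  by ring.
rewrite centered mulr0 addr0 lerD2l.
exact: le_trans (ler_norm _) (norm_convex_powr_le 2 Dp_le Dm_le).
Qed.

Lemma centered_step_fourth_le M :
  t * (M + Dp) ^+ 4 + (1 - t) * (M + Dm) ^+ 4 <=
    M ^+ 4 + 8 * K ^+ 2 * M ^+ 2 + 3 * K ^+ 4.
Proof.
have K0 : 0 <= K := le_trans (normr_ge0 _) Dp_le.
have mom k := norm_convex_powr_le k Dp_le Dm_le.
pose A k := t * Dp ^+ k + (1 - t) * Dm ^+ k.
have -> : t * (M + Dp) ^+ 4 + (1 - t) * (M + Dm) ^+ 4 =
    M ^+ 4 + 4 * M ^+ 3 * A 1 + 6 * M ^+ 2 * A 2 + 4 * M * A 3 + A 4.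
  by rewrite /A; ring.
rewrite /A expr1 centered mulr0 addr0 -/(A 2) -/(A 3) -/(A 4).
have A2 : 6 * M ^+ 2 * A 2 <= 6 * M ^+ 2 * K ^+ 2.
  apply: ler_wpM2l; first by rewrite mulr_ge0 ?sqr_ge0.
  exact: le_trans (ler_norm _) (mom 2%N).
have A4 : A 4 <= K ^+ 4 by exact: le_trans (ler_norm _) (mom 4%N).
(* [4 |M| K^3 <= 2 K^2 (M^2 + K^2)] is AM-GM for [|M| K]. *)
have A3 : 4 * M * A 3 <= 2 * K ^+ 2 * (M ^+ 2 + K ^+ 2).
  have MA3 : 4 * M * A 3 <= 4 * `|M| * K ^+ 3.
    apply: le_trans (ler_norm _) _; rewrite !normrM normr_nat -!mulrA.
    by do 2 apply: ler_wpM2l => //; exact: mom 3%N.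
  have : 0 <= (`|M| - K) ^+ 2 by rewrite sqr_ge0.
  rewrite -[M ^+ 2]real_normK ?num_real //; nra.
have : 0 <= M ^+ 2 by rewrite sqr_ge0.
nra.
Qed.

End CenteredStep.

Section Moments.
Variables (R : realFieldType) (u f : int -> R) (c K : R).
Hypothesis u01 : forall z, 0 <= u z <= 1.
Hypothesis f_centered : forall z,
  u z * (f (z + 1) - f z - c) + (1 - u z) * (f (z - 1) - f z - c) = 0.
Hypothesis f_incrD_le : forall z, `|f (z + 1) - f z - c| <= K.
Hypothesis f_incrB_le : forall z, `|f (z - 1) - f z - c| <= K.

Definition mart (n : nat) (b : seq bool) : R := f (path_end b) - f 0 - c * n%:R.

Local Notation weight := (path_weight u).

Lemma mart_cons n x b :
  mart n.+1 (x :: b) = mart n b + (f (path_end b + step_int x) - f (path_end b) - c).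
Proof. by rewrite /mart /= -natr1; ring. Qed.

Lemma mart0 : mart 0 [::] = 0.
Proof. by rewrite /mart /= mulr0 !subrr. Qed.

Lemma weighted_mart_cons k n b :
  let z := path_end b in
  weight (true :: b) * mart n.+1 (true :: b) ^+ k +
  weight (false :: b) * mart n.+1 (false :: b) ^+ k =
  weight b * (u z * (mart n b + (f (z + 1) - f z - c)) ^+ k +
              (1 - u z) * (mart n b + (f (z - 1) - f z - c)) ^+ k).
Proof. by rewrite !mart_cons /= /step_prob; ring. Qed.

Lemma sum_mart_sqr_le n :
  \sum_(b <- bool_paths n) weight b * mart n b ^+ 2 <= K ^+ 2 * n%:R.
Proof.
elim: n => [|n IH]; first by rewrite big_seq1 mart0 expr0n /= !mulr0.
rewrite big_bool_paths /=.
apply: le_trans (_ : \sum_(b <- bool_paths n)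
    (weight b * mart n b ^+ 2 + weight b * K ^+ 2) <= _).
  apply: ler_sum => b _.
  rewrite weighted_mart_cons -mulrDr ler_wpM2l ?path_weight_ge0 //.
  exact: centered_step_sqr_le.
rewrite big_split /= -big_distrl /= sum_path_weight // mul1r -natr1 mulrDr mulr1.
by rewrite lerD2r.
Qed.

Lemma sum_mart_fourth_le n :
  \sum_(b <- bool_paths n) weight b * mart n b ^+ 4 <= 8 * K ^+ 4 * n%:R ^+ 2.
Proof.
elim: n => [|n IH]; first by rewrite big_seq1 mart0 !expr0n /= !mulr0.
rewrite big_bool_paths /=.
apply: le_trans (_ : \sum_(b <- bool_paths n) (weight b * mart n b ^+ 4 +
    8 * K ^+ 2 * (weight b * mart n b ^+ 2) + 3 * K ^+ 4 * weight b) <= _).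
  apply: ler_sum => b _.
  rewrite weighted_mart_cons.
  have -> : weight b * mart n b ^+ 4 + 8 * K ^+ 2 * (weight b * mart n b ^+ 2) +
      3 * K ^+ 4 * weight b =
      weight b * (mart n b ^+ 4 + 8 * K ^+ 2 * mart n b ^+ 2 + 3 * K ^+ 4) by ring.
  rewrite ler_wpM2l ?path_weight_ge0 //; exact: centered_step_fourth_le.
rewrite !big_split /= -!mulr_sumr sum_path_weight // mulr1.
have K2 : 0 <= K ^+ 2 by rewrite exprn_ge0 // (le_trans _ (f_incrD_le 0)).
have E2_le := ler_wpM2l K2 (sum_mart_sqr_le n).
have K4 : K ^+ 4 = K ^+ 2 * K ^+ 2 by rewrite -exprD.
rewrite K4 -natr1 in IH *; move: (K ^+ 2) K2 E2_le IH => k k0 E2_le IH.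
have : 0 <= k * k * n%:R by rewrite !mulr_ge0.
have : 0 <= k * k by rewrite mulr_ge0.
nra.
Qed.

Lemma mart_deviation_weight_le (e : R) n : 0 < e ->
  \sum_(b <- bool_paths n) (if e * n%:R < `|mart n b| then weight b else 0)
    <= 8 * K ^+ 4 / e ^+ 4 / n%:R ^+ 2.
Proof.
move=> e0; case: n => [|n].
  by rewrite big_seq1 mart0 mulr0n mulr0 normr0 ltxx expr0n invr0 mulr0.
have en0 : 0 < (e * n.+1%:R) ^+ 4 by rewrite exprn_gt0 // mulr_gt0.
apply: le_trans (_ : \sum_(b <- bool_paths n.+1)
    weight b * mart n.+1 b ^+ 4 / (e * n.+1%:R) ^+ 4 <= _).
  apply: ler_sum => b _; case: ifPn => [dev|_]; last first.
    rewrite mulr_ge0 ?invr_ge0 ?(ltW en0) //.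
    by rewrite mulr_ge0 ?(path_weight_ge0 u01) ?exprn_even_ge0.
  rewrite -mulrA; apply: ler_peMr; first exact: path_weight_ge0.
  rewrite ler_pdivlMr // mul1r.
  rewrite -[mart _ _ ^+ 4]ger0_norm ?exprn_even_ge0 // normrX.
  apply: lerXn2r; [exact: mulr_ge0 (ltW e0) (ler0n _ _) | exact: normr_ge0 |].
  exact: ltW.
have -> : 8 * K ^+ 4 / e ^+ 4 / n.+1%:R ^+ 2 =
    8 * K ^+ 4 * n.+1%:R ^+ 2 / (e * n.+1%:R) ^+ 4.
  by field; rewrite addrC natr1 !gt_eqF.
by rewrite -mulr_suml ler_pM2r ?invr_gt0 // sum_mart_fourth_le.
Qed.

End Moments.

Section PrefixProcess.
Variables (T : Type) (pre : nat -> T -> seq bool).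
Hypothesis pre0 : forall w, pre 0 w = [::].
Hypothesis preS : forall n w, exists x, pre n.+1 w = x :: pre n w.

Lemma size_prefix n w : size (pre n w) = n.
Proof.
elim: n => [|n IH]; first by rewrite pre0.
by have [x ->] := preS n w; rewrite /= IH.
Qed.

Lemma prefix_bool_paths n w : pre n w \in bool_paths n.
Proof. by rewrite mem_bool_paths size_prefix. Qed.

Lemma prefix_drop i n w : (i <= n)%N -> pre i w = drop (n - i) (pre n w).
Proof.
elim: n => [|n IH]; first by rewrite leqn0 => /eqP ->; rewrite drop0.
rewrite leq_eqVlt => /orP[/eqP ->|]; first by rewrite subnn drop0.
by rewrite ltnS => hi; rewrite subSn // IH //; have [x ->] := preS n w.
Qed.

Lemma path_at_prefix i n w : (i <= n)%N -> path_at (pre n w) i = path_end (pre i w).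
Proof. by move=> hi; rewrite /path_at size_prefix -prefix_drop. Qed.

Lemma prefix_split n b : [set w | pre n w = b] =
  [set w | pre n.+1 w = true :: b] `|` [set w | pre n.+1 w = false :: b].
Proof.
apply/seteqP; split => w /=.
  by move=> <-; have [[] ->] := preS n w; [left|right].
by case=> h; have [x hx] := preS n w; move: h; rewrite hx => -[_ h'].
Qed.

Lemma prefix_historyP n (h : nat -> int) w :
  (forall i, (i <= n)%N -> path_end (pre i w) = h i) <->
  all (fun i => path_at (pre n w) i == h i) (iota 0 n.+1).
Proof.
split => [H|/allP H i hi].
  by apply/allP => i; rewrite mem_iota leq0n add0n ltnS => hi /=; rewrite path_at_prefix ?H.
by rewrite -(path_at_prefix w hi); apply/eqP/H; rewrite mem_iota leq0n add0n ltnS.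
Qed.

End PrefixProcess.

Section PrefixMeasure.
Context d (T : measurableType d) (R : realType) (mu : {measure set T -> \bar R}).
Variable pre : nat -> T -> seq bool.
Hypothesis pre0 : forall w, pre 0 w = [::].
Hypothesis preS : forall n w, exists x, pre n.+1 w = x :: pre n w.
Hypothesis prefix_measurable : forall n b, measurable [set w | pre n w = b].

Lemma measure_prefix_partition n A : measurable A ->
  mu A = (\sum_(b <- bool_paths n) mu (A `&` [set w | pre n w = b]))%E.
Proof.
move=> mA; elim: n => [|n IH].
  rewrite big_seq1; congr (mu _).
  by apply/seteqP; split => w /=; [move=> Aw; split => //; rewrite pre0 | case].
rewrite IH big_bool_paths; apply: eq_bigr => b _.
rewrite (prefix_split preS) setIUr measureU //; try exact: measurableI.
by apply/seteqP; split => w //= [[_ ->] [_]].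
Qed.

Lemma prefix_event_measurable n (F : pred (seq bool)) :
  measurable [set w | F (pre n w)].
Proof.
have -> : [set w | F (pre n w)] =
    \big[setU/set0]_(b <- bool_paths n | F b) [set w | pre n w = b].
  rewrite -bigcup_seq_cond; apply/seteqP; split => w /=.
    by move=> Fw; exists (pre n w) => //=; rewrite prefix_bool_paths.
  by case=> b /= /andP[_ Fb] ->.
by apply: bigsetU_measurable => b _.
Qed.

Variable weight : seq bool -> R.
Hypothesis prefix_weight :
  forall n b, b \in bool_paths n -> mu [set w | pre n w = b] = (weight b)%:E.

Lemma prefix_event_measure n (F : pred (seq bool)) :
  mu [set w | F (pre n w)] = (\sum_(b <- bool_paths n) (if F b then weight b else 0))%:E.
Proof.
rewrite (measure_prefix_partition n (prefix_event_measurable n F)) -sumEFin.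
rewrite big_seq [RHS]big_seq; apply: eq_bigr => b bin; case: ifPn => Fb.
  rewrite -(prefix_weight bin); congr (mu _); apply/seteqP; split => w /=.
    by case.
  by move=> wb; rewrite wb.
transitivity (mu set0); last by rewrite measure0.
congr (mu _); apply/seteqP; split => w //= [Fw wb].
by move: Fw; rewrite wb (negbTE Fb).
Qed.

End PrefixMeasure.

Section PrefixRealization.
Context (R : realType) d (T : measurableType d) (P : probability T R).
Variables (m : nat) (a a' : R) (pre : nat -> T -> seq bool).
Hypothesis pre0 : forall w, pre 0 w = [::].
Hypothesis preS : forall n w, exists x, pre n.+1 w = x :: pre n w.
Hypothesis prefix_measurable : forall n b, measurable [set w | pre n w = b].
Hypothesis prefix_weight : forall n b, b \in bool_paths n ->
  P [set w | pre n w = b] = (path_weight (up_prob m a a') b)%:E.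

Let event_measure := prefix_event_measure pre0 preS prefix_measurable prefix_weight.

Lemma prefix_realization :
  parrondo_realization P m a a' (fun n w => path_end (pre n w)).
Proof.
split; first by move=> w; rewrite pre0.
split.
  by move=> n w; have [x ->] := preS n w; rewrite /= addrC addKr; case: x; [left|right].
split.
  move=> n k; rewrite [X in measurable X](_ : _ = [set w | path_end (pre n w) == k]).
    exact: (prefix_event_measurable pre0 preS prefix_measurable n (fun b => path_end b == k)).
  by apply/seteqP; split => w /= /eqP.
move=> n h; pose Q b := all (fun i => path_at b i == h i) (iota 0 n.+1).
have histE : [set w | forall i, (i <= n)%N -> path_end (pre i w) = h i] =
    [set w | Q (pre n w)].
  by apply/seteqP; split => w /prefix_historyP; apply.
have up_histE : [set w | (forall i, (i <= n)%N -> path_end (pre i w) = h i) /\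
    path_end (pre n.+1 w) - path_end (pre n w) = 1] =
    [set w | head false (pre n.+1 w) && Q (behead (pre n.+1 w))].
  apply/seteqP; split => w /=; have [x ->] := preS n w; rewrite /= addrC addKr.
    by case: x => [[/(prefix_historyP pre0 preS)]|[]].
  by case: x => //= /(prefix_historyP pre0 preS).
rewrite up_histE histE (event_measure n.+1 (fun b => head false b && Q (behead b))).
rewrite event_measure -EFinM big_bool_paths mulr_sumr.
congr (_%:E); rewrite big_seq [RHS]big_seq; apply: eq_bigr => b /=.
rewrite mem_bool_paths => /eqP sb; rewrite addr0; case: ifP => Qb; last by rewrite mulr0.
have : n \in iota 0 n.+1 by rewrite mem_iota leq0n add0n ltnSn.
by move/(allP Qb); rewrite /path_at sb subnn drop0 => /eqP <-; rewrite mulrC.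
Qed.

End PrefixRealization.

Section RealizationHistory.
Context (R : realType) d (T : measurableType d) (P : probability T R).
Variables (m : nat) (a a' : R) (S : nat -> T -> int).
Hypothesis HS : parrondo_realization P m a a' S.

Local Notation u := (up_prob m a a').

Definition up_step n w : bool := S n.+1 w - S n w == 1.

Fixpoint history n w : seq bool :=
  if n is n'.+1 then up_step n' w :: history n' w else [::].

Lemma historyS n w : exists x, history n.+1 w = x :: history n w.
Proof. by exists (up_step n w). Qed.

Lemma path_end_history n w : path_end (history n w) = S n w.
Proof.
have [S0 [Sstep _]] := HS; elim: n => [|n IH] /=; first by rewrite S0.
rewrite IH /up_step.
by case: (Sstep n w) => h; rewrite h /= -h addrC subrK.
Qed.

Lemma history_setE n b : size b = n ->
  [set w | history n w = b] = [set w | forall i, (i <= n)%N -> S i w = path_at b i].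
Proof.
move=> sb; apply/seteqP; split => w /=.
  move=> <- i hi.
  by rewrite (path_at_prefix (fun=> erefl) historyS) // path_end_history.
elim: n b sb => [|n IH] [|x b] //= [sb] hist.
have hb : history n w = b.
  apply: IH => // i hi; rewrite hist ?(leq_trans hi) // /path_at /= sb subSn //.
have := hist n.+1 (leqnn _); have := hist n (leqnSn _).
rewrite /path_at /= sb subnn subSn // subnn /= drop0 => Sn Sn1.
by rewrite hb /up_step Sn Sn1 addrAC subrr add0r; case: (x).
Qed.

Lemma history_consE n x b : [set w | history n.+1 w = x :: b] =
  [set w | history n w = b] `&` [set w | (S n.+1 w == path_end b + 1) = x].
Proof.
have upE w : up_step n w = (S n.+1 w == path_end (history n w) + 1).
  by rewrite path_end_history /up_step subr_eq [1 + _]addrC.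
apply/seteqP; split => w /=; first by case=> <- <-; rewrite upE.
by case=> hb <-; rewrite upE hb.
Qed.

Lemma history_measurable n b : measurable [set w | history n w = b].
Proof.
have [_ [_ [Smeas _]]] := HS.
elim: n b => [|n IH] [|x b].
- by rewrite (_ : [set w | history 0 w = [::]] = setT) //; apply/seteqP; split.
- by rewrite (_ : [set w | history 0 w = x :: b] = set0) //; apply/seteqP; split.
- by rewrite (_ : [set w | history n.+1 w = [::]] = set0) //; apply/seteqP; split.
rewrite history_consE; apply: measurableI => //.
case: x.
  rewrite [X in measurable X](_ : _ = [set w | S n.+1 w = path_end b + 1]) //.
  by apply/seteqP; split => w /= /eqP.
rewrite [X in measurable X](_ : _ = ~` [set w | S n.+1 w = path_end b + 1]).
  exact: measurableC.
by apply/seteqP; split => w /=; [move/negbT/eqP | move/eqP/negbTE].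
Qed.

Lemma history_measure n b : b \in bool_paths n ->
  P [set w | history n w = b] = (path_weight u b)%:E.
Proof.
have [_ [_ [_ Sprob]]] := HS.
elim: n b => [|n IH] [|x b] //; rewrite mem_bool_paths //=.
  rewrite (_ : [set w | history 0 w = [::]] = setT) ?probability_setT //.
  by apply/seteqP; split.
rewrite eqSS => /eqP sb; have bin : b \in bool_paths n by rewrite mem_bool_paths sb.
have up_measure : P [set w | history n.+1 w = true :: b] =
    (path_weight u b * u (path_end b))%:E.
  rewrite (_ : [set w | _] = [set w | (forall i, (i <= n)%N -> S i w = path_at b i) /\
      S n.+1 w - S n w = 1]).
    by rewrite Sprob -history_setE // IH // /path_at sb subnn drop0 -EFinM mulrC.
  rewrite history_consE history_setE //; apply/seteqP.
  split => w /= [hist]; have Sn : S n w = path_end b.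
  - by rewrite hist // /path_at sb subnn drop0.
  - by move/eqP => ->; split => //; rewrite Sn addrAC subrr add0r.
  - by rewrite hist // /path_at sb subnn drop0.
  - by move=> h; split => //; apply/eqP; rewrite -Sn -h subrKC.
have down_measure : P [set w | history n.+1 w = false :: b] =
    (path_weight u b * (1 - u (path_end b)))%:E.
  have fin := fin_num_measure P _ (history_measurable n.+1 (false :: b)).
  have : P [set w | history n w = b] = (P [set w | history n.+1 w = true :: b] +
      P [set w | history n.+1 w = false :: b])%E.
    rewrite (prefix_split historyS) measureU //; try exact: history_measurable.
    by apply/seteqP; split => w //= [-> []].
  rewrite IH // up_measure -(fineK fin) -EFinD => sumE; have wE := EFin_inj sumE.
  by congr (_%:E); rewrite mulrBr mulr1; lra.
by case: x; rewrite /= /step_prob.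
Qed.

End RealizationHistory.

Lemma cvg_ratio_of_small_deviation (R : realType) (x h : nat -> R) (c G : R) :
  (forall n, `|h n| <= G) ->
  (forall k, \forall n \near \oo, `|x n + h n - c * n%:R| <= k.+1%:R^-1 * n%:R) ->
  x n / n%:R @[n --> \oo] --> c.
Proof.
move=> h_le dev; apply/cvgrPdist_le => e e0.
have [k ke] : exists k : nat, k.+1%:R^-1 < e / 2.
  exists (Num.truncn (e / 2)^-1).
  by rewrite -[X in _ < X]invrK ltf_pV2 ?posrE ?invr_gt0 ?divr_gt0 // truncnS_gt.
near=> n.
have n0 : 0 < n%:R :> R by near: n; exact: nbhs_infty_gtr.
have -> : c - x n / n%:R = - ((x n + h n - c * n%:R) - h n) / n%:R.
  by field; rewrite gt_eqF.
rewrite normrM normrN normfV (gtr0_norm n0) ler_pdivrMr //.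
apply: le_trans (ler_normB _ _) _.
have dev_le : `|x n + h n - c * n%:R| <= k.+1%:R^-1 * n%:R by near: n; exact: dev.
have ken : 2 * (k.+1%:R^-1 * n%:R) <= e * n%:R.
  by rewrite mulrA ler_pM2r // ltW // mulrC -ltr_pdivlMr.
have Gn : 2 * G < e * n%:R.
  rewrite -ltr_pdivrMl //; near: n; exact: nbhs_infty_gtr.
apply: le_trans (lerD dev_le (h_le n)) _.
set t := k.+1%:R^-1 * n%:R in ken *; lra.
Unshelve. all: by end_near.
Qed.

Lemma sum_inv_sqr_le (R : realFieldType) N :
  \sum_(0 <= n < N.+1) (n%:R ^+ 2)^-1 <= 2 - 2 / N.+1%:R :> R.
Proof.
elim: N => [|N IH]; first by rewrite big_nat1 expr0n invr0 divr1 subrr.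
rewrite big_nat_recr //; apply: le_trans (lerD IH (lexx _)) _.
set x : R := N.+1%:R; have x1 : 1 <= x by rewrite ler1n.
have -> : N.+2%:R = x + 1 :> R by rewrite -natr1.
have -> : 2 - 2 / (x + 1) = 2 - 2 / x + x^-2 + (x - 1) / (x ^+ 2 * (x + 1)).
  by field; rewrite !gt_eqF //; lra.
rewrite lerDl divr_ge0 ?subr_ge0 // mulr_ge0 ?exprn_ge0 //; lra.
Qed.

(* The term [n = 0] is [C / 0 = 0]. *)
Lemma nneseries_inv_sqr_lty (R : realType) (C : R) : 0 <= C ->
  (\sum_(n <oo) (C / n%:R ^+ 2)%:E < +oo)%E.
Proof.
move=> C0; apply: (@le_lt_trans _ _ (2 * C)%:E); last by rewrite ltry.
apply: lime_le; first by apply: is_cvg_nneseries => n _ _; rewrite lee_fin divr_ge0.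
apply: nearW => -[|N]; first by rewrite big_geq // lee_fin mulr_ge0.
rewrite sumEFin lee_fin -mulr_sumr mulrC ler_wpM2r //.
by apply: le_trans (sum_inv_sqr_le _ N) _; rewrite gerBl divr_ge0.
Qed.

(* With [f z := z + g z], this says that [f (S_n) - n c] is a martingale. *)
Definition poisson_solution (R : pzRingType) (u g : int -> R) (c : R) : Prop :=
  forall z, u z * (1 + g (z + 1)) + (1 - u z) * (-1 + g (z - 1)) - g z = c.

Lemma up_prob01 (R : realType) m (a a' : R) :
  0 <= a <= 1 -> 0 <= a' <= 1 -> forall z, 0 <= up_prob m a a' z <= 1.
Proof. by move=> a01 a'01 z; rewrite /up_prob; case: ifP. Qed.

Section Convergence.
Context (R : realType) d (T : measurableType d) (P : probability T R).
Variables (m : nat) (a a' : R) (S : nat -> T -> int).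
Hypotheses (a01 : 0 <= a <= 1) (a'01 : 0 <= a' <= 1).
Hypothesis HS : parrondo_realization P m a a' S.

Local Notation u := (up_prob m a a').

Variables (g : int -> R) (c G : R).
Hypothesis g_le : forall z, `|g z| <= G.
Hypothesis g_poisson : poisson_solution u g c.

Let u01 := up_prob01 m a01 a'01.

Let f (z : int) : R := z%:~R + g z.
Let K := 1 + 2 * G + `|c|.

Let f_centered z :
  u z * (f (z + 1) - f z - c) + (1 - u z) * (f (z - 1) - f z - c) = 0.
Proof. by rewrite /f -(g_poisson z) intrD intrB; ring. Qed.

Let f_incr_le z (s : int) : `|s| = 1 -> `|f (z + s) - f z - c| <= K.
Proof.
move=> s1; rewrite /f intrD.
rewrite (_ : _ + _ - _ - c = s%:~R + (g (z + s) - g z) - c); last by ring.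
apply: le_trans (ler_normB _ _) _; apply: lerD => //.
apply: le_trans (ler_normD _ _) _.
have -> : `|s%:~R : R| = 1 by rewrite -intr_norm s1.
by rewrite lerD2l mulr_natl mulr2n; apply: le_trans (ler_normB _ _) _; rewrite lerD.
Qed.

Let f_incrD_le z : `|f (z + 1) - f z - c| <= K.
Proof. exact: f_incr_le. Qed.

Let f_incrB_le z : `|f (z - 1) - f z - c| <= K.
Proof. by apply: f_incr_le; rewrite normrN. Qed.

Let event_measure := prefix_event_measure (fun=> erefl) (historyS S)
  (history_measurable HS) (history_measure HS).

Definition deviation_event k n : set T :=
  [set w | k.+1%:R^-1 * n%:R < `|mart f c n (history S n w)|].

Lemma deviation_event_measurable k n : measurable (deviation_event k n).
Proof.
exact: (prefix_event_measurable (fun=> erefl) (historyS S) (history_measurable HS) n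
  (fun b => k.+1%:R^-1 * n%:R < `|mart f c n b|)).
Qed.

Lemma deviation_event_measure_le k n :
  (P (deviation_event k n) <= (8 * K ^+ 4 * k.+1%:R ^+ 4 / n%:R ^+ 2)%:E)%E.
Proof.
rewrite /deviation_event.
rewrite (event_measure n (fun b => k.+1%:R^-1 * n%:R < `|mart f c n b|)) lee_fin.
apply: le_trans (mart_deviation_weight_le u01 f_centered f_incrD_le f_incrB_le _ _) _.
  by rewrite invr_gt0.
by rewrite exprVn invrK.
Qed.

Lemma lim_sup_deviation_event k : P (lim_sup_set (deviation_event k)) = 0%E.
Proof.
apply: lim_sup_set_cvg0; first exact: deviation_event_measurable.
apply: le_lt_trans (nneseries_inv_sqr_lty (_ : 0 <= 8 * K ^+ 4 * k.+1%:R ^+ 4)).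
  apply: lee_nneseries => [n _ _|n _]; first exact: measure_ge0.
  exact: deviation_event_measure_le.
by rewrite !mulr_ge0 ?exprn_ge0 // (le_trans _ (f_incrD_le 0)).
Qed.

Theorem realization_cvg :
  {ae P, forall w, (S n w)%:~R / n%:R @[n --> \oo] --> (c : R^o)}.
Proof.
have null : P.-negligible (\bigcup_k lim_sup_set (deviation_event k)).
  apply: negligible_bigcup => k; exists (lim_sup_set (deviation_event k)).
  split => //; last exact: lim_sup_deviation_event.
  apply: bigcapT_measurable => n; apply: bigcup_measurable => j _.
  exact: deviation_event_measurable.
apply: negligibleS null => w /= ncvg; apply: contra_notP ncvg => nlim.
apply: (@cvg_ratio_of_small_deviation _ (fun n => (S n w)%:~R)
  (fun n => g (S n w) - g 0) _ (G + G)).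
  by move=> n; apply: le_trans (ler_normB _ _) _; rewrite lerD.
move=> k; have [N devN] : exists N, forall n, (N <= n)%N -> ~ deviation_event k n w.
  apply: contrapT => ndev; apply: nlim; exists k => // N _.
  apply: contrapT => nN; apply: ndev; exists N => n Nn dev; apply: nN; by exists n.
near=> n; have Nn : (N <= n)%N by near: n; exact: nbhs_infty_ge.
have := devN n Nn; rewrite /deviation_event /= => /negP.
by rewrite -leNgt /mart (path_end_history HS) /f add0r addrA.
Unshelve. all: by end_near.
Qed.

End Convergence.

Section UniformUnitInterval.
Context (R : realType).

Definition unit_itv : set (measurableTypeR R) := `[(0:R), 1[.

Lemma measurable_unit_itv : measurable unit_itv.
Proof. exact: measurable_itv. Qed.

Definition unif01 : set (measurableTypeR R) -> \bar R :=
  mrestr (@lebesgue_measure R) measurable_unit_itv.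

Lemma unif01_setT : unif01 setT = 1%E.
Proof. by rewrite /unif01 /mrestr setTI lebesgue_measure_itv /= lte01 oppr0 adde0. Qed.

HB.instance Definition _ := Measure.copy unif01
  (mrestr (@lebesgue_measure R) measurable_unit_itv).
HB.instance Definition _ :=
  @Measure_isProbability.Build _ (measurableTypeR R) R unif01 unif01_setT.

End UniformUnitInterval.

Section UniformCoding.
Context (R : realType).
Variable u : int -> R.
Hypothesis u01 : forall z, 0 <= u z <= 1.

(* The paths of length [n] label a partition of [0,1[ into intervals
   [[cell_lo b, cell_hi b[] of length [path_weight u b]; a step from [b] cuts
   the cell of [b] in proportions [u (path_end b)] and [1 - u (path_end b)]. *)
Fixpoint cell (b : seq bool) : R * R :=
  if b is x :: b' then
    let: (lo, hi) := cell b' in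
    let mid := lo + u (path_end b') * (hi - lo) in
    if x then (lo, mid) else (mid, hi)
  else (0, 1).

Definition cell_lo (b : seq bool) : R := (cell b).1.
Definition cell_hi (b : seq bool) : R := (cell b).2.
Definition cell_mid (b : seq bool) : R := cell_lo b + u (path_end b) * (cell_hi b - cell_lo b).

Lemma cell_cons x b : cell (x :: b) =
  if x then (cell_lo b, cell_mid b) else (cell_mid b, cell_hi b).
Proof. by rewrite /= /cell_mid /cell_lo /cell_hi; case: (cell b). Qed.

Lemma cell_mid_between b : cell_lo b <= cell_hi b ->
  cell_lo b <= cell_mid b <= cell_hi b.
Proof.
move=> lohi; have /andP[u0 u1] := u01 (path_end b); rewrite /cell_mid.
have : u (path_end b) * (cell_hi b - cell_lo b) <= cell_hi b - cell_lo b.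
  by rewrite ler_piMl // subr_ge0.
by rewrite lerDl mulr_ge0 ?subr_ge0 //=; lra.
Qed.

Lemma cell_bounds b :
  [/\ 0 <= cell_lo b, cell_lo b <= cell_hi b, cell_hi b <= 1 &
      cell_hi b - cell_lo b = path_weight u b].
Proof.
elim: b => [|x b [lo0 lohi hi1 len]]; first by rewrite /cell_lo /cell_hi /= subr0.
have /andP[lomid midhi] := cell_mid_between lohi.
rewrite /cell_lo /cell_hi cell_cons -/(cell_lo b) -/(cell_hi b) /= /step_prob -len.
by case: x => /=; split; try lra; rewrite /cell_mid; ring.
Qed.

Fixpoint unif_path (n : nat) (w : R) : seq bool :=
  if n is n'.+1 then (w < cell_mid (unif_path n' w)) :: unif_path n' w else [::].

Lemma unif_pathS n w : exists x, unif_path n.+1 w = x :: unif_path n w.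
Proof. by eexists. Qed.

Lemma unif_path_cell n b w : size b = n -> 0 <= w < 1 ->
  (unif_path n w = b <-> cell_lo b <= w < cell_hi b).
Proof.
move=> sb w01; elim: n b sb => [|n IH] [|x b] //= [sb].
have [_ lohi _ _] := cell_bounds b; have /andP[lomid midhi] := cell_mid_between lohi.
rewrite /cell_lo /cell_hi cell_cons -/(cell_lo b) -/(cell_hi b).
split => [[<- ub]|].
  have /andP[lo hi] := (IH _ sb).1 ub; rewrite ub.
  by case: ifP => wmid /=; rewrite ?lo ?wmid // leNgt wmid hi.
case: x => /= /andP[lo hi]; have ub : unif_path n w = b.
- by apply/(IH _ sb)/andP; split => //; lra.
- by rewrite ub hi.
- by apply/(IH _ sb)/andP; split => //; lra.
- by rewrite ub ltNge lo.
Qed.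

Lemma unif_path_measurable n b :
  measurable [set w : measurableTypeR R | unif_path n w = b].
Proof.
elim: n b => [|n IH] [|x b].
- by rewrite (_ : [set w | _] = setT) //; apply/seteqP; split.
- by rewrite (_ : [set w | _] = set0) //; apply/seteqP; split.
- by rewrite (_ : [set w | _] = set0) //; apply/seteqP; split.
rewrite (_ : [set w | _] =
    [set w | unif_path n w = b] `&` [set w | (w < cell_mid b) = x]).
  apply: measurableI => //; case: x.
    rewrite (_ : [set w | _] = `]-oo, cell_mid b[%classic); first exact: measurable_itv.
    by apply/seteqP; split => w /=; rewrite in_itv.
  rewrite (_ : [set w | _] = `[cell_mid b, +oo[%classic); first exact: measurable_itv.
  apply/seteqP; split => w /=; rewrite in_itv /= andbT leNgt.
    by move=> ->.
  by move/negbTE.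
by apply/seteqP; split => w /= [<- <-].
Qed.

Lemma unif_path_measure n b : b \in bool_paths n ->
  unif01 [set w : measurableTypeR R | unif_path n w = b] = (path_weight u b)%:E.
Proof.
rewrite mem_bool_paths => /eqP sb; have [lo0 lohi hi1 len] := cell_bounds b.
rewrite /unif01 /mrestr (_ : _ `&` _ = `[cell_lo b, cell_hi b[%classic).
  rewrite lebesgue_measure_itv /= lte_fin -len; case: ltP => // hilo.
  by rewrite (@le_anti _ _ (cell_hi b) (cell_lo b)) ?hilo ?lohi // subrr.
apply/seteqP; split => w /=.
  by rewrite /unit_itv /= !in_itv /= => -[/(unif_path_cell sb)].
rewrite !in_itv /= => /andP[lo hi]; have w01 : 0 <= w < 1 by apply/andP; split; lra.
by split; [apply/(unif_path_cell sb w01)/andP | rewrite /unit_itv /= in_itv].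
Qed.

End UniformCoding.

Lemma game_realizable_unif01 (R : realType) (m : nat) (a a' : R) :
  0 <= a <= 1 -> 0 <= a' <= 1 -> game_realizable m a a'.
Proof.
move=> a01 a'01; exists _, _, (@unif01 R).
exists (fun n w => path_end (unif_path (up_prob m a a') n w)).
exact: (prefix_realization (P := @unif01 R) (fun=> erefl) (unif_pathS _)
  (unif_path_measurable _) (unif_path_measure (up_prob01 m a01 a'01))).
Qed.

Definition has_drift (R : realType) (m : nat) (a a' c : R) : Prop :=
  game_realizable m a a' /\
  forall (d : measure_display) (T : measurableType d) (P : probability T R)
         (S : nat -> T -> int), parrondo_realization P m a a' S ->
    {ae P, forall w, (S n w)%:~R / n%:R @[n --> \oo] --> (c : R^o)}.

Lemma has_drift_of_poisson (R : realType) m (a a' : R) (g : int -> R) (c G : R) :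
  0 <= a <= 1 -> 0 <= a' <= 1 -> (forall z, `|g z| <= G) ->
  poisson_solution (up_prob m a a') g c -> has_drift m a a' c.
Proof.
move=> a01 a'01 g_le g_poisson; split; first exact: game_realizable_unif01.
by move=> d T P S HS; apply: (realization_cvg a01 a'01 HS g_le g_poisson).
Qed.

Lemma losing_game_of_drift (R : realType) m (a a' c : R) :
  c < 0 -> has_drift m a a' c -> losing_game m a a'.
Proof.
move=> c0 [realizable cvg_c]; split => // d T P S HS.
by apply: filterS (cvg_c d T P S HS) => w; exists c.
Qed.

Lemma winning_game_of_drift (R : realType) m (a a' c : R) :
  0 < c -> has_drift m a a' c -> winning_game m a a'.
Proof.
move=> c0 [realizable cvg_c]; split => // d T P S HS.
by apply: filterS (cvg_c d T P S HS) => w; exists c.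
Qed.

Section Period3.
Variables (R : realType) (a a' g1 g2 c : R).

Definition period3 (z : int) : R :=
  if (z %% 3)%Z == 0 then 0 else if (z %% 3)%Z == 1 then g1 else g2.

Lemma period3_le z : `|period3 z| <= `|g1| + `|g2|.
Proof.
rewrite /period3; case: ifP => _; first by rewrite normr0 addr_ge0.
by case: ifP => _; rewrite ?lerDl ?lerDr.
Qed.

Hypothesis poisson0 : a' * (1 + g1) + (1 - a') * (-1 + g2) = c.
Hypothesis poisson1 : a * (1 + g2) - (1 - a) - g1 = c.
Hypothesis poisson2 : a + (1 - a) * (-1 + g1) - g2 = c.

Lemma poisson_solution_period3 : poisson_solution (up_prob 3 a a') period3 c.
Proof.
move=> z; have /andP[z_ge0 z_lt3] : (0 <= z %% 3 < 3)%Z.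
  by rewrite modz_ge0 // ltz_pmod.
have dvd3 : (3%:Z %| z)%Z = ((z %% 3)%Z == 0) by apply/dvdz_mod0P/eqP.
rewrite /period3 /up_prob dvd3 -(modzDml z 1) -(modzDml z (-1)).
move: z_ge0 z_lt3; case: (z %% 3)%Z => [[|[|[|n]]]|n] //= _ _.
- by rewrite -poisson0; ring.
- by rewrite -poisson1; ring.
- by rewrite -poisson2; ring.
Qed.

Hypotheses (a01 : 0 <= a <= 1) (a'01 : 0 <= a' <= 1).

Lemma period3_drift : has_drift 3 a a' c.
Proof.
exact: has_drift_of_poisson a01 a'01 period3_le poisson_solution_period3.
Qed.

End Period3.

Theorem corollary4p2 (R : realType) :
  exists (m : nat) (beta beta' p p' pi : R),
    (3 <= m)%N /\
    0 <= beta <= 1 /\ 0 <= beta' <= 1 /\ 0 <= p <= 1 /\ 0 <= p' <= 1 /\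
    0 < pi < 1 /\
    losing_game m beta beta' /\ losing_game m p p' /\
    winning_game m (pi * p + (1 - pi) * beta) (pi * p' + (1 - pi) * beta').
Proof.
exists 3%N, (3 / 7), (5 / 8), (5 / 7), (1 / 8), (1 / 2).
have mix : 1 / 2 * (5 / 7) + (1 - 1 / 2) * (3 / 7) = 4 / 7 :> R by field.
have mix' : 1 / 2 * (1 / 8) + (1 - 1 / 2) * (5 / 8) = 3 / 8 :> R by field.
rewrite mix mix'; split => //; do 5 (split; first by apply/andP; split; lra).
split; [|split].
- apply: (@losing_game_of_drift _ _ _ _ (-9 / 877)); first lra.
  by apply: (period3_drift (g1 := -220 / 877) (g2 := -242 / 877));
    first [field | apply/andP; split; lra].
- apply: (@losing_game_of_drift _ _ _ _ (-1 / 93)); first lra.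
  by apply: (period3_drift (g1 := 88 / 93) (g2 := 22 / 31));
    first [field | apply/andP; split; lra].
- apply: (@winning_game_of_drift _ _ _ _ (9 / 877)); first lra.
  by apply: (period3_drift (g1 := 242 / 877) (g2 := 220 / 877));
    first [field | apply/andP; split; lra].
Qed.
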